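(* Let $\mathbb{M}$ be the generic structure of the class $\mathbb{C}$ and $\widehat{\mathbb{M}}=(\mathcal{G}(\mathbb{M}))^{\mathrm{geo}}$. Whenever $A$ is a finite substructure of $\mathbb{M}$ with $A\le\mathbb{M}$, then $\widehat{A}\le\widehat{\mathbb{M}}$, where $\widehat{A}=(\mathcal{G}(A))^{\mathrm{geo}}$; additionally $\delta_s(A)=\delta_s(\widehat{A})$.
   Context: Fix a natural number $n$ and a symmetric irreflexive $n$-ary relation symbol $S$; substructures are induced. For an $\{S\}$-structure $A$, $K\subseteq A$ with $|K|\ge n$ is a clique if all $n$-element subsets of $K$ (as tuples of distinct elements) lie in $S^A$; maximal cliques are those not properly contained in another clique; $\mathcal{M}(A)$ is the set of maximal cliques. For finite $X$, $|X|_*=\max\{0,|X|-(n-1)\}$; for finite $A$, $\delta_s(A)=|A|-\sum_{K\in\mathcal{M}(A)}|K|_*$; for finite $B\subseteq A$, $\delta_s(A/B)=\delta_s(A)-\delta_s(B)$, and for arbitrary $B\subseteq A$, $\delta_s(A/B)=\inf\{\delta_s(X/X\cap B):X\subseteq A\text{ finite}\}$; $B\le A$ means $\delta_s(X/B)\ge0$ for all $X$ with $B\subseteq X\subseteq A$. An embedding $f:A\to B$ is strong if $f[A]\le B$. $\mathcal{C}^{\mathrm{clq}}_0$: finite $\{S\}$-structures in which distinct maximal cliques meet in fewer than $n$ points; $\mathcal{C}^{\mathrm{clq}}$: those $A\in\mathcal{C}^{\mathrm{clq}}_0$ with $\{a\}\le A$ for all $a$; $\mathcal{C}^{\mathrm{sym}}$: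 those $A\in\mathcal{C}^{\mathrm{clq}}$ all of whose maximal cliques have exactly $n$ elements. For an $\{S\}$-structure $A$ with $\{a\}\le A$ for all $a$, the associated geometry $\mathcal{G}(A)$ is the geometry (finitary matroid with $\mathrm{cl}(\emptyset)=\emptyset$, singletons closed) on the universe of $A$ with dimension $d(X)=\inf\{\delta_s(Y):X\subseteq Y\subseteq A,\ Y\text{ finite}\}$ for finite $X$. A geometry is $m$-pure if $m$ is the maximal natural number such that every $m$-element subset is independent. For a geometry $\mathbf{A}$ on $A$, $\mathbf{A}^{\mathrm{geo}}$ is the $\{S\}$-structure on $A$ whose maximal cliques are exactly the sets $\mathrm{cl}_{\mathbf{A}}(C)$, $C\in[A]^{n-1}$, $\mathrm{cl}_{\mathbf{A}}(C)\neq C$. $\mathbb{C}$ is the class of $A\in\mathcal{C}^{\mathrm{sym}}$ with $\mathcal{G}(A)$ $(n-1)$-pure; it is closed under isomorphism and substructures and has the joint embedding and amalgamation properties with respect to strong embeddings. Its generic structure $\mathbb{M}$ is the unique countable structure whose finite substructures lie in $\mathbb{C}$ and such that whenever $A\le\mathbb{M}$ is finite and $A\le D\in\mathbb{C}$, there is an embedding $f:D\to\mathbb{M}$ fixing $A$ pointwise with $f[D]\le\mathbb{M}$. *)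

From HB Require Import structures.
From mathcomp Require Import all_boot all_order ssralg ssrnum ssrint.
From mathcomp Require Import finmap.
From mathcomp Require Import boolp.

Set Implicit Arguments.
Unset Strict Implicit.
Unset Printing Implicit Defensive.

Local Open Scope fset_scope.

Section Defs.
Variable n : nat.
Variable T : choiceType.
Implicit Types (S : seq T -> Prop) (X Y K B C : {fset T}) (U : T -> Prop).

(* S is a symmetric irreflexive n-ary relation (tuples as sequences). *)
Definition validRel S :=
  (forall t, S t -> size t = n /\ uniq t) /\
  (forall t t', perm_eq t t' -> S t -> S t').

Definition is_clique S K :=
  n <= #|` K| /\
  forall t : seq T, size t = n -> uniq t -> {subset t <= K} -> S t.

Definition is_maxclique S X K :=
  K `<=` X /\ is_clique S K /\
  forall K' : {fset T}, K `<` K' -> K' `<=` X -> ~ is_clique S K'.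

(* |K|_* = max{0, |K| - (n-1)} *)
Definition starsize K : nat := #|` K| - n.-1.

Definition delta S X : int :=
  (Posz #|` X| - Posz (\sum_(K <- fpowerset X | `[< is_maxclique S X K >]) starsize K))%R.

Definition fin_set (Z : T -> Prop) := exists F : {fset T}, forall x, Z x <-> x \in F.

(* B <= U (B finite, U the universe of the ambient structure):
   delta(X/B) >= 0 for all X with B ⊆ X ⊆ U; for finite X,
   delta(X/B) = delta(X) - delta(B); for infinite X,
   delta(X/B) = inf { delta(X') - delta(X' ∩ B) : X' ⊆ X finite }. *)
Definition strong S B U :=
  (forall x, x \in B -> U x) /\
  (forall X, B `<=` X -> (forall x, x \in X -> U x) -> (delta S B <= delta S X)%R) /\
  (forall Z : T -> Prop, ~ fin_set Z -> (forall x, x \in B -> Z x) -> (forall x, Z x -> U x) ->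
     forall X', (forall x, x \in X' -> Z x) -> (delta S (X' `&` B) <= delta S X')%R).

(* d(X) = k in the geometry of the structure with universe U:
   k = inf { delta(Y) : X ⊆ Y ⊆ U, Y finite } (attained, as values are in int) *)
Definition is_dim S U X (k : int) :=
  (exists Y : {fset T}, X `<=` Y /\ (forall y, y \in Y -> U y) /\ delta S Y = k) /\
  (forall Y : {fset T}, X `<=` Y -> (forall y, y \in Y -> U y) -> (k <= delta S Y)%R).

Definition independent S U X := is_dim S U X (Posz #|` X|).

Definition gcl S U X : T -> Prop :=
  fun a => U a /\ exists k, is_dim S U X k /\ is_dim S U (a |` X) k.

(* the relation of G(A)^geo: n-tuples of distinct elements lying in some
   cl(C), C an (n-1)-subset with cl(C) <> C; its maximal cliques are these cl(C) *)
Definition geoRel S U : seq T -> Prop :=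
  fun t => size t = n /\ uniq t /\
    exists C : {fset T}, (forall c, c \in C -> U c) /\ #|` C| = n.-1 /\
      (exists a, gcl S U C a /\ a \notin C) /\ (forall x, x \in t -> gcl S U C x).

Definition inC S X :=
  (forall K K', is_maxclique S X K -> is_maxclique S X K' -> K <> K' ->
      #|` K `&` K'| < n) /\
  (forall a, a \in X -> strong S [fset a] (fun x => x \in X)) /\
  (forall K, is_maxclique S X K -> #|` K| = n) /\
  (forall Y, Y `<=` X -> #|` Y| = n.-1 -> independent S (fun x => x \in X) Y).

End Defs.

Definition embedding (T' T : choiceType) (S' : seq T' -> Prop) (S : seq T -> Prop)
    (D : {fset T'}) (f : T' -> T) :=
  {in D &, injective f} /\
  forall t : seq T', {subset t <= D} -> (S' t <-> S (map f t)).

(* (T, S) (universe all of the countable type T) is the generic structure of C *)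
Definition generic (n : nat) (T : countType) (S : seq T -> Prop) :=
  validRel n S /\
  (forall X : {fset T}, inC n S X) /\
  (forall A : {fset T}, strong n S A (fun _ => True) ->
    forall (T' : choiceType) (S' : seq T' -> Prop) (D : {fset T'}) (g : T -> T'),
      validRel n S' -> inC n S' D -> embedding S S' A g ->
      strong n S' [fset g x | x in A] (fun x => x \in D) ->
      exists f : T' -> T, embedding S' S D f /\ (forall a, a \in A -> f (g a) = a) /\
        strong n S [fset f x | x in D] (fun _ => True)).

(* The predimension of the generic structure counts n-cliques,
   delta(X) = |X| - #{n-cliques of X}, so it is submodular, and (n-1)-purity gives
   delta(Z) >= n-1 whenever Z has n-1 points.  Hence, for an (n-1)-set C, the finite
   parts of cl(C) are exactly the sets covered by some Y containing C with
   delta(Y) <= n-1 ([lowdim Y]), and the cliques of Shat = G(M)^geo are the sets of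
   size >= n covered by a lowdim set.  Maximal Shat-cliques meeting in n-1 points
   coincide, so the maximal Shat-cliques of X /\ P are the traces L /\ P of size
   >= n of those of X.
   Key estimate (dhat is delta computed for Shat): adding to P \/ X a lowdim
   witness Y_L of every maximal Shat-clique L of X gives R with
   delta(R) - delta(P) <= dhat(X) - dhat(X /\ P), because distinct witnesses share
   no n-clique and the n-cliques of Y_L not inside P outnumber its new points by
   at least |L|_* - |L /\ P|_*.  For P = A strong this gives
   dhat(X /\ A) <= dhat(X), i.e. A <= Shat; for P empty it gives
   delta(A) <= dhat(A), while dhat <= delta always, as every n-clique of X lies in
   a maximal Shat-clique L of X, which contains at most |L|_* of them. *)

From HB Require Import structures.
From mathcomp Require Import all_boot all_order ssralg ssrnum ssrint.
From mathcomp Require Import finmap.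
From mathcomp Require Import boolp.
From mathcomp Require Import zify.

Set Implicit Arguments.
Unset Strict Implicit.
Unset Printing Implicit Defensive.

Local Open Scope fset_scope.

Section FsetCard.
Variable T : choiceType.
Implicit Types (A B D Q : {fset T}).

Lemma fsubset_card_exists A k : k <= #|` A| -> exists2 B, B `<=` A & #|` B| = k.
Proof.
move=> leqkA; exists [fset x in take k A].
  by apply/fsubsetP => x; rewrite inE => /mem_take.
rewrite card_fseq undup_id ?take_uniq // size_take.
by move: leqkA; rewrite cardfE; case: ltngtP.
Qed.

Lemma card_bigfcup_le (I : eqType) (r : seq I) (F : I -> {fset T}) :
  #|` \bigcup_(i <- r) F i| <= \sum_(i <- r) #|` F i|.
Proof.
elim/big_rec2: _ => [|i k U _ leUk]; first by rewrite cardfs0.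
by apply: leq_trans (leq_card_fsetU _ _).1 _; rewrite leq_add2l.
Qed.

Lemma card_fsetU_bigfcup_le (I : eqType) (r : seq I) Q (F : I -> {fset T}) :
  (#|` Q `|` \bigcup_(i <- r) F i| <= #|` Q| + \sum_(i <- r) #|` F i `\` Q|)%N.
Proof.
elim: r => [|i r IHr]; first by rewrite !big_nil fsetU0 addn0.
rewrite !big_cons addnCA.
have -> : Q `|` (F i `|` \bigcup_(j <- r) F j)
          = (F i `\` Q) `|` (Q `|` \bigcup_(j <- r) F j).
  by apply/fsetP => x; rewrite !inE; case: (x \in Q); rewrite ?orbT.
by apply: leq_trans (leq_card_fsetU _ _).1 _; rewrite leq_add2l.
Qed.

Lemma card_fsetU_bigfcup_disjoint (I : eqType) (r : seq I) D (F : I -> {fset T}) :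
  uniq r -> {in r &, forall i j, i != j -> [disjoint F i & F j]} ->
  (#|` D `|` \bigcup_(i <- r) F i| + \sum_(i <- r) #|` F i `&` D|
   = #|` D| + \sum_(i <- r) #|` F i|)%N.
Proof.
elim: r => [|i r IHr]; first by rewrite !big_nil fsetU0.
rewrite /= => /andP[ri uniq_r] disjF; rewrite !big_cons.
have sub_r : {subset r <= i :: r} by move=> j; rewrite inE orbC => ->.
have disjFi : [disjoint F i & \bigcup_(j <- r) F j].
  apply/fdisjointP => x xFi; apply/bigfcupP => -[j /andP[jr _] xFj].
  have neq_ij : i != j by apply: contraNneq ri => ->.
  have /fdisjointP/(_ x xFi) := disjF i j (mem_head _ _) (sub_r _ jr) neq_ij.
  by rewrite xFj.
rewrite fsetUCA.
have FiI : F i `&` (D `|` \bigcup_(j <- r) F j) = F i `&` D.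
  by rewrite fsetIUr (eqP disjFi) fsetU0.
have := cardfsUI (F i) (D `|` \bigcup_(j <- r) F j); rewrite FiI.
have := IHr uniq_r (fun j k jr kr => disjF j k (sub_r _ jr) (sub_r _ kr)).
lia.
Qed.

End FsetCard.

Section Cliques.
Variables (n : nat) (T : choiceType).
Implicit Types (R : seq T -> Prop) (X K L : {fset T}).

Lemma clique_sub R K K' :
  is_clique n R K -> K' `<=` K -> (n <= #|` K'|)%N -> is_clique n R K'.
Proof.
move=> [_ cK] sK'K nK'; split=> // t st ut tK'.
by apply: cK => // x /tK'; apply: (fsubsetP sK'K).
Qed.

Lemma maxclique_eq R X L K : is_maxclique n R X L ->
  L `<=` K -> K `<=` X -> is_clique n R K -> K = L.
Proof.
move=> [_ [_ maxL]] sLK sKX cK; apply/eqP; apply: contraT => neqKL.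
by case: (maxL K) => //; rewrite fproperEneq eq_sym neqKL.
Qed.

Lemma maxcliqueU_eq R X L L' : is_maxclique n R X L -> is_maxclique n R X L' ->
  is_clique n R (L `|` L') -> L = L'.
Proof.
move=> mL mL' cU; have sUX : L `|` L' `<=` X by rewrite fsubUset mL.1 mL'.1.
exact: etrans (esym (maxclique_eq mL (fsubsetUl _ _) sUX cU))
              (maxclique_eq mL' (fsubsetUr _ _) sUX cU).
Qed.

Lemma maxclique_exists R X K : K `<=` X -> is_clique n R K ->
  exists2 L, K `<=` L & is_maxclique n R X L.
Proof.
move mE : (#|` X| - #|` K|)%N => m.
elim/ltn_ind: m K mE => m IHm K mE sKX cK.
have [[K' [ltKK' sK'X cK']]|noK'] :=
  pselect (exists K', [/\ K `<` K', K' `<=` X & is_clique n R K']).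
  have ltm : (#|` X| - #|` K'| < m)%N.
    by move: (fproper_ltn_card ltKK') (fsubset_leq_card sK'X); lia.
  have [L sK'L mL] := IHm _ ltm K' erefl sK'X cK'.
  by exists L => //; apply: fsubset_trans sK'L; apply: fproper_sub.
by exists K => //; split=> //; split=> // K' ltKK' sK'X cK'; apply: noK'; exists K'.
Qed.

Lemma clique_ext R1 R2 K : (forall t, {subset t <= K} -> R1 t <-> R2 t) ->
  is_clique n R1 K <-> is_clique n R2 K.
Proof.
by move=> eqR; split=> -[nK cK]; split=> // t st ut tK; apply/(eqR t tK); apply: cK.
Qed.

Lemma maxclique_ext R1 R2 X K :
  (forall t, {subset t <= X} -> R1 t <-> R2 t) ->
  is_maxclique n R1 X K <-> is_maxclique n R2 X K.
Proof.
move=> eqR; have eqC K' : K' `<=` X -> is_clique n R1 K' <-> is_clique n R2 K'.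
  by move=> sK'X; apply: clique_ext => t tK'; apply: eqR => x /tK'/(fsubsetP sK'X).
split=> -[sKX [cK maxK]]; split=> //; split=> [|K' ltKK' sK'X /(eqC _ sK'X)];
  by [apply/eqC | apply: maxK].
Qed.

Definition maxcliques R X : {fset {fset T}} :=
  [fset K in fpowerset X | `[< is_maxclique n R X K >]].

Lemma mem_maxcliques R X K : K \in maxcliques R X <-> is_maxclique n R X K.
Proof.
rewrite !inE fpowersetE /=.
by split=> [/andP[_ /asboolP //]|mK]; rewrite mK.1; apply/asboolP.
Qed.

Lemma delta_maxcliques R X : delta n R X =
  (#|` X|%:Z - (\sum_(K <- maxcliques R X) starsize n K)%N%:Z)%R.
Proof. by rewrite /delta big_fset_condE. Qed.

Lemma delta_ext R1 R2 X : (forall t, {subset t <= X} -> R1 t <-> R2 t) ->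
  delta n R1 X = delta n R2 X.
Proof.
move=> eqR; rewrite !delta_maxcliques; suff -> : maxcliques R1 X = maxcliques R2 X by [].
by apply/fsetP => K; apply/idP/idP => /mem_maxcliques mK;
  apply/mem_maxcliques; apply/(maxclique_ext _ eqR).
Qed.

Lemma delta0 R : delta n R fset0 = 0%R.
Proof.
rewrite delta_maxcliques big1_seq ?cardfs0 // => K /andP[_ /mem_maxcliques[]].
by rewrite fsubset0 => /eqP ->; rewrite /starsize cardfs0.
Qed.

End Cliques.

Section Predimension.
Variables (n : nat) (T : choiceType) (S : seq T -> Prop).
Hypothesis n_gt0 : (0 < n)%N.
Hypothesis age_inC : forall X : {fset T}, inC n S X.
Implicit Types (C K X Y Z : {fset T}) (U : T -> Prop).

Local Notation cliques := (maxcliques n S).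

Lemma clique_card K : is_clique n S K -> #|` K| = n.
Proof.
move=> cK; have [_ [_ [maxclique_card _]]] := age_inC K; apply: maxclique_card.
split=> //; split=> // K' ltKK' sK'K.
by move: (fproper_ltn_card ltKK') (fsubset_leq_card sK'K); lia.
Qed.

Lemma maxcliqueE X K : is_maxclique n S X K <-> K `<=` X /\ is_clique n S K.
Proof.
split=> [[sKX [cK _]] // | [sKX cK]]; split=> //; split=> // K' ltKK' _ cK'.
by move: (fproper_ltn_card ltKK'); rewrite (clique_card cK) (clique_card cK'); lia.
Qed.

Lemma mem_cliques X K : (K \in cliques X) = (K `<=` X) && `[< is_clique n S K >].
Proof.
apply/idP/andP => [/mem_maxcliques/maxcliqueE[-> /asboolP] //|[sKX /asboolP cK]].
exact/mem_maxcliques/maxcliqueE.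
Qed.

Lemma delta_cliques X : delta n S X = (#|` X|%:Z - #|` cliques X|%:Z)%R.
Proof.
rewrite delta_maxcliques [#|` cliques X|]card_fset_sum1 big_seq [in RHS]big_seq.
congr (_ - Posz _)%R; apply: eq_bigr => K /mem_maxcliques/maxcliqueE[_].
by rewrite /starsize => /clique_card ->; lia.
Qed.

Lemma cliquesS X Y : X `<=` Y -> cliques X `<=` cliques Y.
Proof.
move=> sXY; apply/fsubsetP => K; rewrite !mem_cliques => /andP[sKX ->].
by rewrite (fsubset_trans sKX sXY).
Qed.

Lemma cliquesI X Y : cliques (X `&` Y) = cliques X `&` cliques Y.
Proof.
apply/fsetP => K; rewrite in_fsetI !mem_cliques fsubsetI.
by case: (K `<=` X); case: (K `<=` Y); case: `[< _ >].
Qed.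

Lemma delta_submod X Y :
  (delta n S (X `|` Y) + delta n S (X `&` Y) <= delta n S X + delta n S Y)%R.
Proof.
have le_cliques :
    (#|` cliques X| + #|` cliques Y| <= #|` cliques (X `|` Y)| + #|` cliques (X `&` Y)|)%N.
  rewrite cliquesI -cardfsUI leq_add2r; apply: fsubset_leq_card.
  by rewrite fsubUset !cliquesS ?fsubsetUl ?fsubsetUr.
by rewrite !delta_cliques; have := cardfsUI X Y; lia.
Qed.

Lemma delta_ge_pure C Z : #|` C| = n.-1 -> C `<=` Z -> (Posz n.-1 <= delta n S Z)%R.
Proof.
move=> cardC sCZ; have [_ [_ [_ pureZ]]] := age_inC Z.
by rewrite -cardC; apply: (pureZ C sCZ cardC).2.
Qed.

Lemma delta_pure C : #|` C| = n.-1 -> delta n S C = Posz n.-1.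
Proof.
move=> cardC; have := delta_ge_pure cardC (fsubset_refl C).
by rewrite delta_cliques cardC; lia.
Qed.

Lemma card_cliques_le Z : (#|` cliques Z| <= #|` Z| - n.-1)%N.
Proof.
have [leZ|ltZ] := leqP n.-1 #|` Z|.
  have [C sCZ cardC] := fsubset_card_exists leZ.
  by have := delta_ge_pure cardC sCZ; rewrite delta_cliques; lia.
suff -> : cliques Z = fset0 by rewrite cardfs0.
apply/fsetP => K; rewrite mem_cliques inE.
apply/negbTE/andP => -[sKZ /asboolP/clique_card cardK].
by move: (fsubset_leq_card sKZ); lia.
Qed.

Definition lowdim Y := (delta n S Y <= Posz n.-1)%R.

Lemma lowdimU Y1 Y2 : lowdim Y1 -> lowdim Y2 ->
  (n.-1 <= #|` Y1 `&` Y2|)%N -> lowdim (Y1 `|` Y2).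
Proof.
rewrite /lowdim => low1 low2 /fsubset_card_exists[C sC cardC].
by have := delta_ge_pure cardC sC; have := delta_submod Y1 Y2; lia.
Qed.

Lemma lowdim_clique K : is_clique n S K -> lowdim K.
Proof.
move=> cK; have : K \in cliques K by rewrite mem_cliques fsubset_refl; apply/asboolP.
rewrite /lowdim delta_cliques (clique_card cK) -fsub1set => /fsubset_leq_card.
by rewrite cardfs1; lia.
Qed.

Lemma is_dim_uniq U X k k' : is_dim n S U X k -> is_dim n S U X k' -> k = k'.
Proof.
move=> [[Y [sXY [UY <-]]] minY] [[Y' [sXY' [UY' <-]]] minY'].
by have := minY Y' sXY' UY'; have := minY' Y sXY UY; lia.
Qed.

Lemma is_dim_pure U C : #|` C| = n.-1 -> (forall c, c \in C -> U c) ->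
  is_dim n S U C (Posz n.-1).
Proof.
move=> cardC UC; split; last by move=> Y sCY _; apply: delta_ge_pure sCY.
by exists C; split; [exact: fsubset_refl | split=> //; rewrite delta_pure].
Qed.

Lemma gclP U C a : #|` C| = n.-1 -> (forall c, c \in C -> U c) ->
  gcl n S U C a <->
  U a /\ exists Y, [/\ a |` C `<=` Y, forall y, y \in Y -> U y & lowdim Y].
Proof.
move=> cardC UC; split=> [[Ua [k [dimC [[Y [sY [UY deltaY]]] _]]]] | [Ua [Y [sY UY lowY]]]].
  split=> //; exists Y; split=> //.
  by rewrite /lowdim deltaY (is_dim_uniq dimC (is_dim_pure cardC UC)).
have sCY : C `<=` Y := fsubset_trans (fsubsetU1 a C) sY.
split=> //; exists (Posz n.-1); split; first exact: is_dim_pure.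
split=> [|Y' sY' _]; last exact: delta_ge_pure (fsubset_trans (fsubsetU1 a C) sY').
exists Y; split=> //; split=> //.
by have := delta_ge_pure cardC sCY; move: lowY; rewrite /lowdim; lia.
Qed.

Lemma lowdim_cover U C (s : seq T) : #|` C| = n.-1 -> (forall c, c \in C -> U c) ->
  (forall x, x \in s ->
     exists Y, [/\ x |` C `<=` Y, forall y, y \in Y -> U y & lowdim Y]) ->
  exists Y, [/\ C `<=` Y, {subset s <= Y}, forall y, y \in Y -> U y & lowdim Y].
Proof.
move=> cardC UC; elim: s => [|x s IHs] cover.
  by exists C; split=> //; rewrite /lowdim delta_pure.
have [|Y0 [sCY0 sY0 UY0 low0]] := IHs.
  by move=> y ys; apply: cover; rewrite inE ys orbT.
have [Y1 [sY1 UY1 low1]] := cover x (mem_head x s).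
exists (Y0 `|` Y1); split.
- by rewrite fsubsetU ?sCY0.
- move=> y; rewrite inE => /predU1P[->|ys]; rewrite in_fsetU.
    by rewrite (fsubsetP sY1) ?fset1U1 ?orbT.
  by rewrite sY0.
- by move=> y /fsetUP[]; [apply: UY0 | apply: UY1].
apply: lowdimU => //; rewrite -cardC; apply: fsubset_leq_card.
by rewrite fsubsetI sCY0 (fsubset_trans (fsubsetU1 x C) sY1).
Qed.

Lemma geoRelP U t : geoRel n S U t <->
  [/\ size t = n, uniq t &
      exists Y, [/\ {subset t <= Y}, forall y, y \in Y -> U y & lowdim Y]].
Proof.
split=> [[st [ut [C [UC [cardC [_ tC]]]]]] | [st ut [Y [tY UY lowY]]]].
  split=> //; have [|Y [_ tY UY lowY]] := lowdim_cover (s := t) cardC UC.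
    by move=> x /tC /(gclP _ cardC UC)[].
  by exists Y.
case: t st ut tY => [|a t] //=; first by move=> n0; move: n_gt0; rewrite -n0.
move=> st /andP[a_t ut] tY; pose C := [fset x in t].
have cardC : #|` C| = n.-1 by rewrite card_fseq undup_id // -st.
have sCY : C `<=` Y by apply/fsubsetP => x; rewrite inE => xt; apply: tY; rewrite inE xt orbT.
have UC c : c \in C -> U c by move/(fsubsetP sCY); apply: UY.
have gclY x : x \in Y -> gcl n S U C x.
  move=> xY; apply/(gclP x cardC UC); split; first exact: UY.
  by exists Y; split=> //; rewrite fsubUset fsub1set xY.
split=> //; split; first by rewrite /= a_t.
exists C; split=> //; split=> //; split.
  by exists a; split; [apply/gclY/tY/mem_head | rewrite inE].
by move=> x /tY; apply: gclY.
Qed.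

Local Notation Shat := (geoRel n S (fun _ => True)).

Lemma clique_geoP K :
  is_clique n Shat K <-> (n <= #|` K|)%N /\ exists2 Y, K `<=` Y & lowdim Y.
Proof.
split=> [[nK cK] | [nK [Y sKY lowY]]]; last first.
  split=> // t st ut tK; apply/geoRelP; split=> //.
  by exists Y; split=> // x /tK /(fsubsetP sKY).
split=> //; have [C sCK cardC] := fsubset_card_exists (leq_trans (leq_pred n) nK).
have [|Y [sCY sKCY _ lowY]] :=
  lowdim_cover (U := fun _ => True) (s := K `\` C) cardC (fun _ _ => I).
  move=> x; rewrite inE => /andP[xC xK].
  have /geoRelP[_ _ [Y [xCY _ lowY]]] : Shat (x |` C).
    apply: cK; first by rewrite cardfsU1 xC cardC; lia.
    - exact: fset_uniq.
    - by move=> y /fset1UP[->|/(fsubsetP sCK)].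
  by exists Y; split=> //; apply/fsubsetP.
exists Y => //; apply/fsubsetP => x xK; have [xC|xC] := boolP (x \in C).
  exact: (fsubsetP sCY).
by apply: sKCY; rewrite inE xC.
Qed.

Lemma clique_geoU K1 K2 : is_clique n Shat K1 -> is_clique n Shat K2 ->
  (n.-1 <= #|` K1 `&` K2|)%N -> is_clique n Shat (K1 `|` K2).
Proof.
move=> /clique_geoP[nK1 [Y1 sK1 low1]] /clique_geoP[_ [Y2 sK2 low2]] leK12.
apply/clique_geoP; split; first exact: leq_trans nK1 (fsubset_leq_card (fsubsetUl _ _)).
exists (Y1 `|` Y2); first exact: fsetUSS.
by apply: lowdimU => //; apply: leq_trans leK12 (fsubset_leq_card (fsetISS sK1 sK2)).
Qed.

Lemma maxclique_geo_eq X L L' : is_maxclique n Shat X L -> is_maxclique n Shat X L' ->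
  (n.-1 <= #|` L `&` L'|)%N -> L = L'.
Proof.
move=> mL mL' leLL'; apply: (maxcliqueU_eq mL mL').
exact: clique_geoU mL.2.1 mL'.2.1 leLL'.
Qed.

Lemma maxclique_geoI X P L : is_maxclique n Shat X L -> (n <= #|` L `&` P|)%N ->
  is_maxclique n Shat (X `&` P) (L `&` P).
Proof.
move=> mL nLP; split; first exact: fsetSI mL.1.
split; first exact: clique_sub mL.2.1 (fsubsetIl _ _) nLP.
move=> K ltLPK sKXP cK.
have sKX : K `<=` X := fsubset_trans sKXP (fsubsetIl _ _).
have leLK : (n.-1 <= #|` L `&` K|)%N.
  apply: leq_trans (leq_pred n) (leq_trans nLP (fsubset_leq_card _)).
  by rewrite fsubsetI fsubsetIl (fproper_sub ltLPK).
have sKL : K `<=` L.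
  rewrite -(maxclique_eq mL (fsubsetUl L K)); first exact: fsubsetUr.
    by rewrite fsubUset mL.1.
  exact: clique_geoU mL.2.1 cK leLK.
move: ltLPK; rewrite fproperE => /andP[_ /negP]; apply.
by rewrite fsubsetI sKL (fsubset_trans sKXP (fsubsetIr _ _)).
Qed.

Lemma maxclique_geo_lift X P K : is_maxclique n Shat (X `&` P) K ->
  exists2 L, is_maxclique n Shat X L & L `&` P = K.
Proof.
move=> mK; have [sKXP [cK _]] := mK.
have [L sKL mL] := maxclique_exists (fsubset_trans sKXP (fsubsetIl _ _)) cK.
exists L => //; have sKLP : K `<=` L `&` P.
  by rewrite fsubsetI sKL (fsubset_trans sKXP (fsubsetIr _ _)).
apply: (maxclique_eq mK sKLP (fsetSI _ mL.1)).
exact: clique_sub mL.2.1 (fsubsetIl _ _) (leq_trans cK.1 (fsubset_leq_card sKLP)).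
Qed.

Lemma sum_starsize_maxclique_geoI X P :
  (\sum_(K <- maxcliques n Shat (X `&` P)) starsize n K
   = \sum_(L <- maxcliques n Shat X) starsize n (L `&` P))%N.
Proof.
pose big := [fset L in maxcliques n Shat X | n <= #|` L `&` P|]%N.
have mem_big L : (L \in big) = (L \in maxcliques n Shat X) && (n <= #|` L `&` P|)%N.
  by rewrite [in LHS]inE.
have -> : maxcliques n Shat (X `&` P) = [fset L `&` P | L in big].
  apply/fsetP => K; apply/idP/imfsetP => [/mem_maxcliques mK | [L /= + ->]].
    have [L mL LPK] := maxclique_geo_lift mK.
    by exists L; rewrite // mem_big LPK mK.2.1.1 andbT; apply/mem_maxcliques.
  by rewrite mem_big => /andP[/mem_maxcliques mL nLP]; apply/mem_maxcliques/maxclique_geoI.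
rewrite big_imfset /=; last first.
  move=> L L'; rewrite !mem_big => /andP[/mem_maxcliques mL nLP].
  move=> /andP[/mem_maxcliques mL' _] eqLP.
  apply: maxclique_geo_eq mL mL' _; apply: leq_trans (leq_pred n) (leq_trans nLP _).
  by apply: fsubset_leq_card; rewrite fsubsetI fsubsetIl eqLP fsubsetIl.
rewrite -big_fset_condE big_mkcond /=; apply: eq_bigr => L _.
by case: leqP => // ltLP; rewrite /starsize; lia.
Qed.

Lemma delta_geo_le X : (delta n Shat X <= delta n S X)%R.
Proof.
have sub_cliques : cliques X `<=` \bigcup_(L <- maxcliques n Shat X) cliques L.
  apply/fsubsetP => K; rewrite mem_cliques => /andP[sKX /asboolP cK].
  have cK' : is_clique n Shat K.
    apply/clique_geoP; rewrite (clique_card cK); split=> //.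
    by exists K; last exact: lowdim_clique.
  have [L sKL mL] := maxclique_exists sKX cK'.
  apply/bigfcupP; exists L; first by rewrite andbT; apply/mem_maxcliques.
  by rewrite mem_cliques sKL; apply/asboolP.
have : (#|` cliques X| <= \sum_(L <- maxcliques n Shat X) starsize n L)%N.
  apply: leq_trans (fsubset_leq_card sub_cliques) _.
  apply: leq_trans (card_bigfcup_le _ _) _.
  by apply: leq_sum => L _; apply: card_cliques_le.
by rewrite delta_maxcliques delta_cliques; lia.
Qed.

Lemma cliques_witness_disjoint X L L' Y Y' :
  is_maxclique n Shat X L -> is_maxclique n Shat X L' -> L != L' ->
  L `<=` Y -> lowdim Y -> L' `<=` Y' -> lowdim Y' ->
  [disjoint cliques Y & cliques Y'].
Proof.
move=> mL mL' neqLL' sLY lowY sL'Y' lowY'; apply/fdisjointP => K.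
rewrite !mem_cliques => /andP[sKY /asboolP cK]; apply/negP => /andP[sKY' _].
apply: (negP neqLL'); apply/eqP/(maxcliqueU_eq mL mL')/clique_geoP; split.
  exact: leq_trans mL.2.1.1 (fsubset_leq_card (fsubsetUl _ _)).
exists (Y `|` Y'); first exact: fsetUSS.
apply: lowdimU => //; apply: leq_trans (fsubset_leq_card (_ : K `<=` Y `&` Y')).
  by rewrite (clique_card cK) leq_pred.
by rewrite fsubsetI sKY sKY'.
Qed.

Lemma card_witness_le P X L Y : L `<=` X -> (n <= #|` L|)%N -> L `<=` Y -> lowdim Y ->
  (#|` Y `\` (P `|` X)| + starsize n L + #|` cliques (Y `&` P)|
   <= #|` cliques Y| + starsize n (L `&` P))%N.
Proof.
move=> sLX nL sLY lowY.
have cardY : (#|` Y| <= #|` cliques Y| + n.-1)%N.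
  by move: lowY; rewrite /lowdim delta_cliques; lia.
have cardYPX : (#|` Y `&` P| + #|` L `\` P| <= #|` Y `&` (P `|` X)|)%N.
  have disjP : (Y `&` P) `&` (L `\` P) = fset0.
    by apply/fsetP => x; rewrite !inE; case: (x \in P); rewrite ?andbF.
  rewrite -cardfsUI disjP cardfs0 addn0; apply: fsubset_leq_card.
  rewrite fsubUset fsetIS ?fsubsetUl //=; apply/fsubsetP => x /fsetDP[xL _].
  by rewrite in_fsetI (fsubsetP sLY) // in_fsetU (fsubsetP sLX) ?orbT.
have := card_cliques_le (Y `&` P); have := cardfsID (P `|` X) Y.
have := cardfsID P L; have := fsubset_leq_card (fsetSI P sLY).
by rewrite /starsize; lia.
Qed.

Section Hull.
Variables (P X : {fset T}) (Y : {fset T} -> {fset T}).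
Local Notation MX := (maxcliques n Shat X).
Hypothesis witnessY : forall L, L \in MX -> L `<=` Y L /\ lowdim (Y L).
Local Notation hull := (P `|` X `|` \bigcup_(L <- MX) Y L).

Lemma card_cliques_hull :
  (#|` cliques P| + \sum_(L <- MX) #|` cliques (Y L)|
   <= #|` cliques hull| + \sum_(L <- MX) #|` cliques (Y L `&` P)|)%N.
Proof.
have disjY : {in MX &, forall L L', L != L' -> [disjoint cliques (Y L) & cliques (Y L')]}.
  move=> L L' LMX L'MX neqLL'.
  have [[sLY lowY] [sL'Y lowY']] := (witnessY LMX, witnessY L'MX).
  have [/mem_maxcliques mL /mem_maxcliques mL'] := (LMX, L'MX).
  exact: cliques_witness_disjoint mL mL' neqLL' sLY lowY sL'Y lowY'.
have sub_hull : cliques P `|` \bigcup_(L <- MX) cliques (Y L) `<=` cliques hull.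
  rewrite fsubUset cliquesS ?(fsubset_trans (fsubsetUl P X) (fsubsetUl _ _)) //=.
  apply/bigfcupsP => L LMX _; apply: cliquesS.
  exact: fsubset_trans (bigfcup_sup _ LMX isT) (fsubsetUr _ _).
have -> : (\sum_(L <- MX) #|` cliques (Y L `&` P)|
           = \sum_(L <- MX) #|` cliques (Y L) `&` cliques P|)%N.
  by apply: eq_bigr => L _; rewrite cliquesI.
have := card_fsetU_bigfcup_disjoint (cliques P) (F := fun L => cliques (Y L))
  (fset_uniq MX) disjY.
by move=> <-; rewrite leq_add2r; apply: fsubset_leq_card.
Qed.

Lemma sum_card_witness_le :
  (\sum_(L <- MX) #|` Y L `\` (P `|` X)| + \sum_(L <- MX) starsize n L
     + \sum_(L <- MX) #|` cliques (Y L `&` P)|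
   <= \sum_(L <- MX) #|` cliques (Y L)| + \sum_(L <- MX) starsize n (L `&` P))%N.
Proof.
rewrite -!big_split big_seq [leqRHS]big_seq; apply: leq_sum => L LMX.
have [sLY lowY] := witnessY LMX; have /mem_maxcliques mL := LMX.
exact: card_witness_le mL.1 mL.2.1.1 sLY lowY.
Qed.

Lemma delta_hull_le :
  (delta n S hull + delta n Shat (X `&` P) <= delta n S P + delta n Shat X)%R.
Proof.
have : (#|` hull| <= #|` P `|` X| + \sum_(L <- MX) #|` Y L `\` (P `|` X)|)%N.
  exact: card_fsetU_bigfcup_le.
have := card_cliques_hull; have := sum_card_witness_le; have := cardfsUI P X.
rewrite [P `&` X]fsetIC !delta_cliques !delta_maxcliques sum_starsize_maxclique_geoI.
lia.
Qed.

End Hull.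

Lemma relative_delta_geo_le P X : exists2 R, P `|` X `<=` R &
  (delta n S R + delta n Shat (X `&` P) <= delta n S P + delta n Shat X)%R.
Proof.
have witness L : exists Y, L \in maxcliques n Shat X -> L `<=` Y /\ lowdim Y.
  have [/mem_maxcliques[_ [/clique_geoP[_ [Y sLY lowY]] _]]|_] :=
    boolP (L \in maxcliques n Shat X); first by exists Y.
  by exists L.
have [Y witnessY] := choice witness.
by exists (P `|` X `|` \bigcup_(L <- maxcliques n Shat X) Y L);
  [exact: fsubsetUl | exact: delta_hull_le].
Qed.

Section StrongSubstructure.
Variable A : {fset T}.
Hypothesis A_strong : strong n S A (fun _ => True).

Lemma delta_strong_le X : A `<=` X -> (delta n S A <= delta n S X)%R.
Proof. by move=> sAX; apply: A_strong.2.1. Qed.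

Lemma delta_fsetI_strong Y : (delta n S (Y `&` A) <= delta n S Y)%R.
Proof. by have := delta_submod Y A; have := delta_strong_le (fsubsetUr Y A); lia. Qed.

Lemma geoRel_strong t : {subset t <= A} ->
  geoRel n S (fun x => x \in A) t <-> Shat t.
Proof.
move=> tA; rewrite !geoRelP; split=> -[st ut [Y [tY UY lowY]]]; split=> //.
  by exists Y.
exists (Y `&` A); split.
- by move=> x xt; rewrite in_fsetI tY ?tA.
- by move=> y /fsetIP[].
- by have := delta_fsetI_strong Y; move: lowY; rewrite /lowdim; lia.
Qed.

Lemma delta_geo_fsetI_strong X : (delta n Shat (X `&` A) <= delta n Shat X)%R.
Proof.
have [R sAXR le_delta] := relative_delta_geo_le A X.
by have := delta_strong_le (fsubset_trans (fsubsetUl A X) sAXR); lia.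
Qed.

Lemma strong_geo : strong n Shat A (fun _ => True).
Proof.
split=> //; split=> [X sAX _ | Z _ _ _ X' _]; last exact: delta_geo_fsetI_strong.
by rewrite -{1}(fsetIidPr sAX); apply: delta_geo_fsetI_strong.
Qed.

Lemma delta_geo_strong : delta n Shat A = delta n S A.
Proof.
have [R sAR le_delta] := relative_delta_geo_le fset0 A.
have := delta_strong_le (fsubset_trans (fsubsetUr fset0 A) sAR).
have := delta_geo_le A; move: le_delta; rewrite fsetI0 !delta0; lia.
Qed.

End StrongSubstructure.

End Predimension.

Theorem mainTheorem6 (n : nat) (T : countType) (S : seq T -> Prop) :
  (0 < n)%N -> generic n S ->
  forall A : {fset T}, strong n S A (fun _ => True) ->
    (* hat A is the induced substructure of hat M on A *)
    (forall t : seq T, {subset t <= A} ->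
       (geoRel n S (fun x => x \in A) t <-> geoRel n S (fun _ => True) t)) /\
    (* hat A <= hat M *)
    strong n (geoRel n S (fun _ => True)) A (fun _ => True) /\
    (* delta_s(A) = delta_s(hat A) *)
    delta n S A = delta n (geoRel n S (fun x => x \in A)) A.
Proof.
move=> n_gt0 [_ [age_inC _]] A A_strong.
have induced := geoRel_strong n_gt0 age_inC A_strong.
split=> //; split; first exact: strong_geo.
by rewrite (delta_ext n induced) delta_geo_strong.
Qed.
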